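(* Let $S=\mathbb{K}[x_1,\dots,x_n]$ and let $I\subseteq S$ be a monomial ideal which contains no variable, and let $s\geq 1$ be an integer. Assume that $I^s$ has linear quotients with respect to (the restriction to $G(I^s)$ of) a monomial order $<$ on $S$. Then there exists a linear order $\prec$ on $G(I)$ such that for any two monomials $u\prec v$ in $G(I)$ with $\gcd(u,v)=1$ there exists a monomial $w\in G(I)$ with $w\neq u,v$, $u\prec w$, and $\operatorname{supp}(w)\subseteq\operatorname{supp}(u)\cup\operatorname{supp}(v)$.
   Context: $G(I)$ denotes the set of minimal monomial generators of a monomial ideal $I$; $\operatorname{supp}(u)$ is the set of variables dividing a monomial $u$. A monomial order is a total order on monomials of $S$ which is multiplicative ($u<v\Rightarrow uw<vw$) and has $1$ as its least element. If $u_1\prec u_2\prec\dots\prec u_t$ is a linear order on $G(I)$, then $I$ has linear quotients with respect to this order if for every $2\leq i\leq t$ the colon ideal $(u_1,\dots,u_{i-1}):u_i$ is generated by a subset of the variables. *)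

(* Monomials of S = K[x_1..x_n] are exponent vectors. *)
From mathcomp Require Import all_boot.
Set Implicit Arguments. Unset Strict Implicit. Unset Printing Implicit Defensive.

Definition mon (n : nat) := {ffun 'I_n -> nat}.

Definition mone n : mon n := [ffun => 0%N].
Definition mmul n (u v : mon n) : mon n := [ffun i => u i + v i].
Definition mvar n (k : 'I_n) : mon n := [ffun i => nat_of_bool (i == k)].
Definition mprod n (s : seq (mon n)) : mon n := foldr (@mmul n) (mone n) s.

Definition mdiv n (u v : mon n) : bool := [forall i, u i <= v i].

Definition msupp n (u : mon n) : pred 'I_n := fun i => 0 < u i.

Definition mcoprime n (u v : mon n) : bool := [forall i, minn (u i) (v i) == 0].

(* A monomial ideal is described by its set of monomials.  The monomial
   ideal generated by a finite list of monomials: *)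
Definition mideal n (gens : seq (mon n)) : mon n -> Prop :=
  fun m => exists2 g, g \in gens & mdiv g m.

Definition mideal_pow n (gens : seq (mon n)) (s : nat) : mon n -> Prop :=
  fun m => exists gs : seq (mon n),
    [/\ size gs = s, all (mem gens) gs & mdiv (mprod gs) m].

Definition mingen n (J : mon n -> Prop) (u : mon n) : Prop :=
  J u /\ forall d, mdiv d u -> J d -> d = u.

Definition mlt n (le : rel (mon n)) (u v : mon n) : bool := le u v && (u != v).

Definition monomial_order n (le : rel (mon n)) : Prop :=
  [/\ reflexive le, antisymmetric le, transitive le & total le] /\
  (forall u v w, mlt le u v -> mlt le (mmul u w) (mmul v w)) /\
  (forall u, le (mone n) u).

(* J has linear quotients w.r.t. the restriction of le to G(J):
   for every u in G(J) that is not the first element, the colon ideal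
   (v : v in G(J), v < u) : u, whose monomials are the m with
   v | m*u for some such v, is generated by a subset V of the variables. *)
Definition linear_quotients n (J : mon n -> Prop) (le : rel (mon n)) : Prop :=
  forall u, mingen J u -> (exists v, mingen J v /\ mlt le v u) ->
    exists V : {set 'I_n}, forall m : mon n,
      (exists v, [/\ mingen J v, mlt le v u & mdiv v (mmul m u)]) <->
      (exists2 k, k \in V & mdiv (mvar k) m).

From mathcomp Require Import all_boot zify.
From Stdlib Require Import Classical.
Set Implicit Arguments. Unset Strict Implicit. Unset Printing Implicit Defensive.

(* Proof of Proposition 2.7.  List G(I) in decreasing order for the monomial
   order <.  Let u > v be coprime minimal generators of I and suppose that no
   minimal generator w <> v with w < u is supported on A = supp u ∪ supp v,
   i.e. every minimal generator g <> v supported on A satisfies g >= u.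
   Then every generator of I supported on A is divisible by v or is >= u, and
   multiplying such factors shows that every product of s generators of I
   supported on A is divisible by v^s or is >= u v^(s-1).  Consequently v^s
   is a minimal generator of I^s, and the minimal generator U of I^s dividing
   u v^(s-1) satisfies U >= u v^(s-1) > v^s (coprimality excludes v^s | U).
   Linear quotients give a variable x_k in (v^s) : U, hence a minimal
   generator W < U of I^s dividing x_k U; the same dichotomy forces either
   v | x_k (excluded since I contains no variable) or W >= u v^(s-1) >= U. *)

Section MonomialArithmetic.
Variable n : nat.
Implicit Types (a b c d : mon n).

Lemma mdivP a b : reflect (forall i, a i <= b i) (mdiv a b).
Proof. exact: (iffP forallP). Qed.

Lemma mmulE a b i : mmul a b i = a i + b i.
Proof. by rewrite ffunE. Qed.

Lemma mmulC a b : mmul a b = mmul b a.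
Proof. by apply/ffunP=> i; rewrite !mmulE addnC. Qed.

Lemma mmulA a b c : mmul a (mmul b c) = mmul (mmul a b) c.
Proof. by apply/ffunP=> i; rewrite !mmulE addnA. Qed.

Lemma mul1m a : mmul (mone n) a = a.
Proof. by apply/ffunP=> i; rewrite mmulE ffunE. Qed.

Definition mpow k a : mon n := mprod (nseq k a).

Lemma mpowS k a : mpow k.+1 a = mmul a (mpow k a).
Proof. by []. Qed.

Lemma mpowE k a i : mpow k a i = k * a i.
Proof.
elim: k => [|k IH]; first by rewrite /mpow /= ffunE.
by rewrite mpowS mmulE IH mulSn.
Qed.

Lemma mdiv_refl a : mdiv a a.
Proof. by apply/mdivP. Qed.

Lemma mdiv_trans a b c : mdiv a b -> mdiv b c -> mdiv a c.
Proof. by move=> /mdivP ab /mdivP bc; apply/mdivP=> i; apply: leq_trans (ab i) (bc i). Qed.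

Lemma mdiv_anti a b : mdiv a b -> mdiv b a -> a = b.
Proof. by move=> /mdivP ab /mdivP ba; apply/ffunP=> i; apply/eqP; rewrite eqn_leq ab ba. Qed.

Lemma mdiv_mul a b c d : mdiv a b -> mdiv c d -> mdiv (mmul a c) (mmul b d).
Proof. by move=> /mdivP ab /mdivP cd; apply/mdivP=> i; rewrite !mmulE leq_add. Qed.

Lemma mdiv1m a : mdiv (mone n) a.
Proof. by apply/mdivP=> i; rewrite ffunE. Qed.

Lemma mdiv_pow k a b : mdiv a b -> mdiv (mpow k a) (mpow k b).
Proof. by move=> ab; elim: k => [|k IH]; [apply: mdiv1m | rewrite !mpowS mdiv_mul]. Qed.

Lemma mdiv_mprod a s : a \in s -> mdiv a (mprod s).
Proof.
elim: s => //= b s IH; rewrite inE => /predU1P[->|/IH a_s].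
  by apply/mdivP=> i; rewrite mmulE leq_addr.
apply/mdivP=> i; move/mdivP: a_s => /(_ i); rewrite mmulE => /leq_trans.
by apply; apply: leq_addl.
Qed.

Lemma coprime_pow_div u v c k :
  mcoprime u v -> mdiv (mpow k.+1 v) (mmul c (mmul u (mpow k v))) -> mdiv v c.
Proof.
move=> /forallP uv /mdivP dv; apply/mdivP=> i.
move: (dv i) (uv i); rewrite !mmulE !mpowE => /[swap] /eqP; lia.
Qed.

Definition supported_in (A : pred 'I_n) a := forall i, msupp a i -> A i.

Lemma supported_div (A : pred 'I_n) a b :
  mdiv a b -> supported_in A b -> supported_in A a.
Proof. by move=> /mdivP ab Ab i ai; apply: Ab; apply: leq_trans ai (ab i). Qed.

End MonomialArithmetic.

Section MonomialOrder.
Variables (n : nat) (le : rel (mon n)).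
Hypothesis le_mo : monomial_order le.
Implicit Types (a b c d : mon n).

Lemma mo_refl : reflexive le. Proof. by case: le_mo => [[]]. Qed.
Lemma mo_anti : antisymmetric le. Proof. by case: le_mo => [[]]. Qed.
Lemma mo_trans : transitive le. Proof. by case: le_mo => [[]]. Qed.
Lemma mo_total : total le. Proof. by case: le_mo => [[]]. Qed.

Lemma mlt_le a b : mlt le a b -> le a b. Proof. by case/andP. Qed.

Lemma mlt_irr a : ~~ mlt le a a. Proof. by rewrite /mlt eqxx andbF. Qed.

Lemma mlt_le_trans a b c : mlt le a b -> le b c -> mlt le a c.
Proof.
case/andP=> ab /eqP a_neq_b bc; rewrite /mlt (mo_trans ab bc); apply/eqP=> ac.
by apply: a_neq_b; apply: mo_anti; rewrite ab ac bc.
Qed.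

Lemma mlt_mulr a b c : mlt le a b -> mlt le (mmul a c) (mmul b c).
Proof. by case: le_mo => _ [mul _]; apply: mul. Qed.

Lemma le_mulr a b c : le a b -> le (mmul a c) (mmul b c).
Proof.
case: (eqVneq a b) => [-> _|a_neq_b ab]; first exact: mo_refl.
by apply/mlt_le/mlt_mulr; rewrite /mlt ab a_neq_b.
Qed.

Lemma le_mul a b c d : le a b -> le c d -> le (mmul a c) (mmul b d).
Proof.
move=> ab cd; apply: (mo_trans (le_mulr c ab)).
by rewrite (mmulC b c) (mmulC b d); apply: le_mulr.
Qed.

(* Divisibility refines every monomial order, since 1 is the least monomial. *)
Lemma mdiv_le a b : mdiv a b -> le a b.
Proof.
move=> /mdivP ab; have -> : b = mmul [ffun i => b i - a i] a.
  by apply/ffunP=> i; rewrite mmulE ffunE subnK.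
by rewrite -{1}(mul1m a); apply: le_mulr; case: le_mo => _ [].
Qed.

End MonomialOrder.

Section MinimalGenerators.
Variable n : nat.
Implicit Types (a b d m : mon n).

Definition mdeg m := \sum_i m i.

Lemma mdeg_lt d m : mdiv d m -> d <> m -> mdeg d < mdeg m.
Proof.
move=> /mdivP dm d_neq_m.
have [i di_neq] : exists i, d i <> m i.
  apply: NNPP => all_eq; apply: d_neq_m; apply/ffunP=> i.
  by apply: NNPP => ne; apply: all_eq; exists i.
rewrite /mdeg (bigD1 i) // [X in _ < X](bigD1 i) //=.
have rest : \sum_(j | j != i) d j <= \sum_(j | j != i) m j by apply: leq_sum.
by rewrite -addSn; apply: leq_add; first by move: (dm i); lia.
Qed.

Lemma mingen_below (J : mon n -> Prop) m : J m -> exists2 d, mdiv d m & mingen J d.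
Proof.
elim: {m}(mdeg m) {-2}m (leqnn (mdeg m)) => [|N IH] m deg_m Jm.
  exists m; first exact: mdiv_refl.
  by split=> // d dm Jd; apply: NNPP => /(mdeg_lt dm); lia.
case: (classic (mingen J m)) => [min_m|]; first by exists m; first exact: mdiv_refl.
case/not_and_or=> [//|/not_all_ex_not[d /not_all_ex_not[dm /not_all_ex_not[Jd d_neq]]]].
have [e ed min_e] := IH d (ltac:(move: (mdeg_lt dm d_neq); lia)) Jd.
by exists e => //; apply: mdiv_trans ed dm.
Qed.

Lemma mingen_idealP (gens : seq (mon n)) u :
  mingen (mideal gens) u <-> (u \in gens) && all (fun g => mdiv g u ==> (g == u)) gens.
Proof.
split.
  case=> [[g gg g_u] min_u].
  have g_eq_u : g = u by apply: min_u => //; exists g => //; apply: mdiv_refl.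
  subst g; rewrite gg; apply/allP=> g gg'; apply/implyP=> gu; apply/eqP.
  by apply: min_u => //; exists g => //; apply: mdiv_refl.
case/andP=> ug /allP low; split; first by exists u => //; apply: mdiv_refl.
move=> d du [g gg gd]; move/implyP: (low g gg) => /(_ (mdiv_trans gd du)) /eqP g_eq_u.
by subst g; apply: mdiv_anti.
Qed.

Lemma mingen_pow_prod (gens : seq (mon n)) s W : mingen (mideal_pow gens s) W ->
  exists2 ws, size ws = s /\ all (mem gens) ws & W = mprod ws.
Proof.
case=> [[ws [size_ws gens_ws ws_W]] min_W]; exists ws => //.
by symmetry; apply: min_W => //; exists ws; split=> //; apply: mdiv_refl.
Qed.

End MinimalGenerators.

Section ProductDichotomy.
Variables (n : nat) (le : rel (mon n)) (u v : mon n).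
Hypotheses (le_mo : monomial_order le) (v_le_u : le v u).

Lemma prod_dichotomy h gs : all (fun g => mdiv v g || le u g) (h :: gs) ->
  mdiv (mpow (size gs).+1 v) (mprod (h :: gs)) \/
  le (mmul u (mpow (size gs) v)) (mprod (h :: gs)).
Proof.
elim: gs h => [|h' gs IH] h /andP[h_ok gs_ok].
  case/orP: h_ok => [vh|uh]; [left | right].
    exact: mdiv_mul vh (mdiv1m _).
  exact: (le_mul le_mo uh (mo_refl le_mo (mone n))).
have v_le_h : le v h.
  by case/orP: h_ok => [/(mdiv_le le_mo)//|]; apply: mo_trans v_le_u.
case: (IH h' gs_ok) => /= [div_rest|le_rest].
  case/orP: h_ok => [vh|uh]; first by left; rewrite mpowS mdiv_mul.
  by right; apply: le_mul => //; apply: mdiv_le.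
by right; rewrite mpowS mmulA (mmulC u v) -mmulA; apply: le_mul.
Qed.

End ProductDichotomy.

Section NoWitness.
Variables (n : nat) (gens : seq (mon n)) (s : nat) (le : rel (mon n)) (u v : mon n).
Hypotheses (no_var : forall k : 'I_n, ~ mideal gens (mvar k))
  (le_mo : monomial_order le)
  (lq : linear_quotients (mideal_pow gens s.+1) le)
  (gen_u : mingen (mideal gens) u) (gen_v : mingen (mideal gens) v)
  (v_lt_u : mlt le v u) (coprime_uv : mcoprime u v).

Let A : pred 'I_n := fun i => msupp u i || msupp v i.

(* Negation of the conclusion for the pair (u, v): every minimal generator
   of I other than v supported on supp u ∪ supp v is >= u. *)
Hypothesis no_witness :
  forall g, mingen (mideal gens) g -> supported_in A g -> g != v -> le u g.

Let uvs := mmul u (mpow s v).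
Let vs := mpow s.+1 v.

Lemma gen_dichotomy h : h \in gens -> supported_in A h -> mdiv v h || le u h.
Proof.
move=> h_gens A_h; have : mideal gens h by exists h => //; apply: mdiv_refl.
case/mingen_below=> g g_h min_g; case: (eqVneq g v) => [<-|g_neq_v]; first by rewrite g_h.
have u_le_g := no_witness min_g (supported_div g_h A_h) g_neq_v.
by rewrite orbC (mo_trans le_mo u_le_g (mdiv_le le_mo g_h)).
Qed.

Lemma gens_prod_dichotomy gs : size gs = s.+1 -> all (mem gens) gs ->
  supported_in A (mprod gs) -> mdiv vs (mprod gs) \/ le uvs (mprod gs).
Proof.
case: gs => [//|h gs] [size_gs] gens_gs A_gs; rewrite /vs /uvs -size_gs.
apply: prod_dichotomy le_mo (mlt_le v_lt_u) _ _ _.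
apply/allP=> g g_in; apply: gen_dichotomy; first exact: (allP gens_gs).
exact: supported_div (mdiv_mprod g_in) A_gs.
Qed.

Lemma mingen_pow_dichotomy W : mingen (mideal_pow gens s.+1) W -> supported_in A W ->
  mdiv vs W \/ le uvs W.
Proof. by case/mingen_pow_prod=> ws [size_ws gens_ws] ->; apply: gens_prod_dichotomy. Qed.

Lemma supported_uvs : supported_in A uvs.
Proof.
move=> i; rewrite /msupp mmulE mpowE /A /msupp.
by case: (posnP (v i)) => [->|]; rewrite ?muln0 ?addn0 ?orbF ?orbT.
Qed.

Lemma vs_lt_uvs : mlt le vs uvs.
Proof. by rewrite /vs mpowS /uvs; apply: mlt_mulr. Qed.

Lemma mpow_mingen : mingen (mideal_pow gens s.+1) vs.
Proof.
have [g g_gens g_v] := gen_v.1; split.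
  exists (nseq s.+1 g); split; [exact: size_nseq | by rewrite all_nseq /= g_gens |].
  exact: mdiv_pow.
move=> d d_vs [gs [size_gs gens_gs gs_d]]; have gs_vs := mdiv_trans gs_d d_vs.
have A_vs : supported_in A vs.
  by move=> i; rewrite /msupp mpowE muln_gt0 /A /msupp => /andP[_ ->]; rewrite orbT.
case: (gens_prod_dichotomy size_gs gens_gs (supported_div gs_vs A_vs)) => [vs_gs|uvs_gs].
  exact: mdiv_anti d_vs (mdiv_trans vs_gs gs_d).
have := mlt_le_trans le_mo vs_lt_uvs (mo_trans le_mo uvs_gs (mdiv_le le_mo gs_vs)).
by rewrite (negbTE (mlt_irr _ _)).
Qed.

(* The minimal generator U of I^(s+1) dividing u v^s satisfies U >= u v^s:
   otherwise v^(s+1) | u v^s, so v = 1 would divide u. *)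
Lemma top_generator :
  exists2 U, mingen (mideal_pow gens s.+1) U & mdiv U uvs /\ le uvs U.
Proof.
have [gu gu_gens gu_u] := gen_u.1; have [gv gv_gens gv_v] := gen_v.1.
have : mideal_pow gens s.+1 uvs.
  exists (gu :: nseq s gv); split; first by rewrite /= size_nseq.
    by rewrite /= gu_gens all_nseq /= gv_gens orbT.
  exact: mdiv_mul gu_u (mdiv_pow s gv_v).
case/mingen_below=> U U_uvs min_U; exists U => //; split=> //.
case: (mingen_pow_dichotomy min_U (supported_div U_uvs supported_uvs)) => // vs_U.
have v_1 : mdiv v (mone n).
  by apply: coprime_pow_div coprime_uv _; rewrite mul1m; apply: mdiv_trans vs_U U_uvs.
have v_eq_u : v = u := gen_u.2 v (mdiv_trans v_1 (mdiv1m u)) gen_v.1.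
by move: v_lt_u; rewrite v_eq_u (negbTE (mlt_irr _ _)).
Qed.

(* The linear quotient of U produces a minimal generator W < U of I^(s+1)
   dividing x_k U, which the dichotomy rules out. *)
Lemma no_witness_absurd : False.
Proof.
have [U min_U [U_uvs uvs_U]] := top_generator.
have vs_lt_U := mlt_le_trans le_mo vs_lt_uvs uvs_U.
have [V colon_V] := lq min_U (ex_intro _ vs (conj mpow_mingen vs_lt_U)).
(* v^(s+1) : U lies in the colon ideal, so a variable x_k in V divides it. *)
pose m : mon n := [ffun i => vs i - U i].
have [k k_V xk_m] : exists2 k, k \in V & mdiv (mvar k) m.
  apply/(colon_V m).1; exists vs; split=> //; first exact: mpow_mingen.
  by apply/mdivP=> i; rewrite mmulE [m i]ffunE; lia.
have [W [min_W W_lt_U W_xkU]] :=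
  (colon_V (mvar k)).2 (ex_intro2 _ _ k k_V (mdiv_refl _)).
have vk_pos : 0 < v k.
  move/mdivP: xk_m => /(_ k); rewrite !ffunE eqxx /vs mpowE.
  by case: (v k) => [|vk]; rewrite ?muln0.
have A_xkU : supported_in A (mmul (mvar k) U).
  move=> i; rewrite /msupp mmulE ffunE; case: (eqVneq i k) => [->|_] /= Ui.
    by rewrite /A /msupp vk_pos orbT.
  exact: supported_div U_uvs supported_uvs i Ui.
case: (mingen_pow_dichotomy min_W (supported_div W_xkU A_xkU)) => [vs_W|uvs_W].
  have v_xk : mdiv v (mvar k).
    apply: coprime_pow_div coprime_uv (mdiv_trans vs_W (mdiv_trans W_xkU _)).
    exact: mdiv_mul (mdiv_refl _) U_uvs.
  have [g g_gens g_v] := gen_v.1.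
  exact: no_var k (ex_intro2 _ _ g g_gens (mdiv_trans g_v v_xk)).
have := mlt_le_trans le_mo W_lt_U (mo_trans le_mo (mdiv_le le_mo U_uvs) uvs_W).
by rewrite (negbTE (mlt_irr _ _)).
Qed.

End NoWitness.

Lemma coprime_witness n (gens : seq (mon n)) s le (u v : mon n) :
  (forall k : 'I_n, ~ mideal gens (mvar k)) -> monomial_order le ->
  linear_quotients (mideal_pow gens s.+1) le ->
  mingen (mideal gens) u -> mingen (mideal gens) v -> mlt le v u -> mcoprime u v ->
  exists w, [/\ mingen (mideal gens) w, mlt le w u, w != v &
              forall i, msupp w i -> msupp u i || msupp v i].
Proof.
move=> no_var le_mo lq gen_u gen_v v_lt_u coprime_uv; apply: NNPP => no_w.
apply: (no_witness_absurd no_var le_mo lq gen_u gen_v v_lt_u coprime_uv).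
move=> g gen_g A_g g_neq_v; case/orP: (mo_total le_mo u g) => // g_le_u.
case: (eqVneq g u) => [->|g_neq_u]; first exact: mo_refl.
by case: no_w; exists g; split=> //; rewrite /mlt g_le_u g_neq_u.
Qed.

Section GeneratorList.
Variables (n : nat) (gens : seq (mon n)) (le : rel (mon n)).
Hypothesis le_mo : monomial_order le.

Definition mingen_list : seq (mon n) :=
  sort (fun a b => le b a)
    (undup [seq g <- gens | all (fun g' => mdiv g' g ==> (g' == g)) gens]).

Lemma mingen_list_uniq : uniq mingen_list.
Proof. by rewrite sort_uniq undup_uniq. Qed.

Lemma mem_mingen_list u : u \in mingen_list <-> mingen (mideal gens) u.
Proof. by rewrite mingen_idealP mem_sort mem_undup mem_filter andbC. Qed.

Let ge_trans : transitive (fun a b : mon n => le b a).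
Proof. by move=> y x z xy yz; exact: (mo_trans le_mo yz xy). Qed.

Let sorted_list : sorted (fun a b => le b a) mingen_list.
Proof. by apply: sort_sorted => a b; apply: mo_total. Qed.

Lemma mingen_list_lt u v : u \in mingen_list -> v \in mingen_list ->
  index u mingen_list < index v mingen_list -> mlt le v u.
Proof.
move=> u_l v_l uv_idx; rewrite /mlt (sorted_ltn_index ge_trans sorted_list u v u_l v_l uv_idx).
by apply: contraTneq uv_idx => ->; rewrite ltnn.
Qed.

Lemma mingen_list_index u w : u \in mingen_list -> w \in mingen_list ->
  mlt le w u -> index u mingen_list < index w mingen_list.
Proof.
move=> u_l w_l /andP[w_le_u w_neq_u]; rewrite ltnNge; apply: contra w_neq_u => wu_idx.
apply/eqP/mo_anti; first exact: le_mo.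
by rewrite w_le_u (sorted_leq_index ge_trans (mo_refl le_mo) sorted_list w u w_l u_l wu_idx).
Qed.

End GeneratorList.

Theorem proposition2p7 (n : nat) (gens : seq (mon n)) (s : nat)
    (le : rel (mon n)) :
  (forall k : 'I_n, ~ mideal gens (mvar k)) ->
  (1 <= s)%N ->
  monomial_order le ->
  linear_quotients (mideal_pow gens s) le ->
  exists l : seq (mon n),
    [/\ uniq l,
        (forall u, u \in l <-> mingen (mideal gens) u) &
        forall u v, u \in l -> v \in l -> (index u l < index v l)%N ->
          mcoprime u v ->
          exists w, [/\ w \in l, w != u, w != v,
                        (index u l < index w l)%N &
                        forall i, msupp w i -> msupp u i || msupp v i]].
Proof.
move=> no_var s_pos le_mo; case: s s_pos => // s _ lq.
exists (mingen_list gens le); split; [exact: mingen_list_uniq | exact: mem_mingen_list |].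
move=> u v u_l v_l uv_idx coprime_uv.
have [w [gen_w w_lt_u w_neq_v A_w]] :=
  coprime_witness no_var le_mo lq ((mem_mingen_list _ _ _).1 u_l)
    ((mem_mingen_list _ _ _).1 v_l) (mingen_list_lt le_mo u_l v_l uv_idx) coprime_uv.
have w_l := (mem_mingen_list _ _ _).2 gen_w.
exists w; split=> //; first by case/andP: w_lt_u.
exact: mingen_list_index.
Qed.
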